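(* Let $L$ be a finite-dimensional simple Lie algebra, and let $L = L_a \oplus L_b$ be a decomposition of the vector space $L$ into a direct sum of two nonzero subspaces $L_a, L_b$ which is a grading, i.e. for every pair $j,k \in \{a,b\}$ there exists $l \in \{a,b\}$ with $[L_j, L_k] \subseteq L_l$. Then this grading is a $\mathbb{Z}_2$-grading: the labels $a,b$ can be identified with the two elements $0,1$ of the group $\mathbb{Z}_2$ (by a bijection $\{a,b\}\to\mathbb{Z}_2$) in such a way that $[L_i, L_j] \subseteq L_{i+j}$ for all $i,j \in \mathbb{Z}_2$.
   Context: A grading of a Lie algebra $L$ is a decomposition of $L$ as a direct sum of vector subspaces $L_j$, $j\in\mathcal J$, such that for any $j,k\in\mathcal J$ there is $l\in\mathcal J$ with $[L_j,L_k]\subseteq L_l$. A $G$-grading for an abelian group $G$ (written additively) is a decomposition $L=\bigoplus_{i\in G}L_i$ with $[L_i,L_j]\subseteq L_{i+j}$ for all $i,j\in G$. *)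

From HB Require Import structures.
From mathcomp Require Import all_boot all_order all_algebra.
Set Implicit Arguments. Unset Strict Implicit. Unset Printing Implicit Defensive.
Import GRing.Theory.
Local Open Scope ring_scope.

Definition lie_bracket (K : fieldType) (V : vectType K) (br : V -> V -> V) : Prop :=
  [/\ (forall (c : K) (x y z : V), br (c *: x + y) z = c *: br x z + br y z),
      (forall (c : K) (x y z : V), br x (c *: y + z) = c *: br x y + br x z),
      (forall x : V, br x x = 0)
    & (forall x y z : V, br x (br y z) + br y (br z x) + br z (br x y) = 0)].

Definition bracket_sub (K : fieldType) (V : vectType K) (br : V -> V -> V)
    (A B C : {vspace V}) : Prop :=
  forall x y, x \in A -> y \in B -> br x y \in C.

Definition lie_ideal (K : fieldType) (V : vectType K) (br : V -> V -> V)
    (I : {vspace V}) : Prop :=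
  forall x y, x \in I -> br x y \in I.

Definition simple_lie (K : fieldType) (V : vectType K) (br : V -> V -> V) : Prop :=
  (exists x y : V, br x y != 0) /\
  (forall I : {vspace V}, lie_ideal br I -> I = 0%VS \/ I = fullv).

Inductive ab_label := la | lb.

Definition grade_of (K : fieldType) (V : vectType K) (La Lb : {vspace V})
    (j : ab_label) : {vspace V} :=
  match j with la => La | lb => Lb end.

From HB Require Import structures.
From mathcomp Require Import all_boot all_order all_algebra.
Import GRing.Theory.
Local Open Scope ring_scope.

(* Up to renaming the labels, [A, B] <= B.  Then [B, B] <= A, for otherwise B
   would be a proper nonzero ideal.  If [A, A] <= A this is a Z_2-grading with A
   even.  Otherwise [A, A] <= B, and the Jacobi identity shows both that the
   center of B is an ideal, hence zero, and that every [x, y] with x, y in A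
   lies in B and commutes with B; so [A, A] = 0 and A is even after all. *)

Lemma directv_addC (K : fieldType) (V : vectType K) (A B : {vspace V}) :
  directv (A + B) = directv (B + A).
Proof. by apply/directv_addP/directv_addP; rewrite capvC. Qed.

Lemma summand_neq_fullv {K : fieldType} {V : vectType K} {A B : {vspace V}} :
  directv (A + B) -> B != 0%VS -> A != fullv.
Proof. by move=> /directv_addP AB0; apply: contraNneq => A_full; rewrite -AB0 A_full capfv. Qed.

Section LieBracket.
Context {K : fieldType} {V : vectType K} {br : V -> V -> V}.
Hypothesis br_lie : lie_bracket br.

Lemma lie_bracket_linear x : linear (br x).
Proof. by case: br_lie => _ brr _ _ c y z; apply: brr. Qed.

HB.instance Definition _ x :=
  GRing.isLinear.Build K V V *:%R (br x) (lie_bracket_linear x).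

Lemma lie_bracketDl x y z : br (x + y) z = br x z + br y z.
Proof. by case: br_lie => brl _ _ _; have := brl 1 x y z; rewrite !scale1r. Qed.

Lemma lie_anticomm x y : br y x = - br x y.
Proof.
case: br_lie => _ _ brxx _; apply/eqP; rewrite -addr_eq0 addrC.
by have := brxx (x + y); rewrite lie_bracketDl !linearD /= !brxx add0r addr0 => ->.
Qed.

Lemma lie_jacobi x y z : br x (br y z) + br y (br z x) + br z (br x y) = 0.
Proof. by case: br_lie. Qed.

Lemma bracket_subC {A B C : {vspace V}} :
  bracket_sub br A B C -> bracket_sub br B A C.
Proof. by move=> AB x y xB yA; rewrite lie_anticomm rpredN AB. Qed.

Lemma bracket_subS {A B C D : {vspace V}} :
  (C <= D)%VS -> bracket_sub br A B C -> bracket_sub br A B D.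
Proof. by move=> /subvP CD AB x y xA yB; apply/CD/AB. Qed.

Definition centralizer (A : {vspace V}) : {vspace V} :=
  (\bigcap_(i < \dim A) lker (linfun (br (tnth (vbasis A) i))))%VS.

Lemma memv_centralizer (A : {vspace V}) x :
  reflect {in A, forall y, br x y = 0} (x \in centralizer A).
Proof.
rewrite memvE; apply: (iffP subv_bigcapP) => [x_cen | x_cen i _].
  have /subvP: (A <= lker (linfun (br x)))%VS.
    rewrite -(span_basis (vbasisP A)); apply/span_subvP => _ /tnthP[i ->].
    have := x_cen i isT; rewrite -memvE !memv_ker !lfunE /= lie_anticomm.
    by rewrite oppr_eq0.
  by move=> A_ker y /A_ker; rewrite memv_ker lfunE => /eqP.
rewrite -memvE memv_ker lfunE /= lie_anticomm x_cen ?oppr0 //.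
by rewrite vbasis_mem ?mem_tnth.
Qed.

Lemma simple_lie_ideal_full {I : {vspace V}} :
  simple_lie br -> lie_ideal br I -> I != 0%VS -> I = fullv.
Proof. by case=> _ simple I_ideal; case: (simple I I_ideal) => // ->; rewrite eqxx. Qed.

Lemma lie_ideal_summand {A B : {vspace V}} : (A + B)%VS = fullv ->
  bracket_sub br A A A -> bracket_sub br A B A -> lie_ideal br A.
Proof.
move=> full AA AB x y xA.
have /memv_addP[u uA [v vB ->]] : y \in (A + B)%VS by rewrite full memvf.
by rewrite linearD /= rpredD ?(AA x u) ?(AB x v).
Qed.

Section OddSquare.
Variables A B : {vspace V}.
Hypotheses (AB_full : (A + B)%VS = fullv) (AB_direct : directv (A + B)).
Hypotheses (AA_B : bracket_sub br A A B) (AB_A : bracket_sub br A B A)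
  (BB_A : bracket_sub br B B A).

Lemma center_lie_ideal : lie_ideal br (A :&: centralizer A).
Proof.
move=> c y; rewrite memv_cap => /andP[cA /memv_centralizer c_cen].
have /memv_addP[u uA [v vB ->]] : y \in (A + B)%VS by rewrite AB_full memvf.
rewrite linearD /= c_cen // add0r memv_cap AB_A //=.
apply/memv_centralizer => w wA; apply/eqP; rewrite lie_anticomm oppr_eq0.
have := lie_jacobi c v w.
rewrite c_cen; last exact: (bracket_subC AB_A).
by rewrite (lie_anticomm c w) c_cen // oppr0 linear0 !add0r => ->.
Qed.

Lemma bracket_centralizes x y : x \in B -> y \in B -> br x y \in centralizer A.
Proof.
move=> xB yB; apply/memv_centralizer => w wA.
have BA_A := bracket_subC AB_A.
have in_B : br w (br x y) \in B := AA_B _ _ wA (BB_A _ _ xB yB).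
have in_A : br w (br x y) \in A.
  have /eqP := lie_jacobi w x y; rewrite -addrA addr_eq0 => /eqP ->.
  by rewrite rpredN rpredD ?(BA_A _ _ xB (BA_A _ _ yB wA)) ?(BA_A _ _ yB (AB_A _ _ wA xB)).
apply/eqP; rewrite lie_anticomm oppr_eq0 -memv0 -(directv_addP AB_direct).
by rewrite memv_cap in_A in_B.
Qed.

Lemma square_abelian : simple_lie br -> B != 0%VS -> bracket_sub br B B 0%VS.
Proof.
move=> simple B_nz.
have center0 : (A :&: centralizer A)%VS = 0%VS.
  apply/eqP; apply: contraT => /(simple_lie_ideal_full simple center_lie_ideal).
  move=> center_full; case/eqP: (summand_neq_fullv AB_direct B_nz).
  by apply/eqP; rewrite eqEsubv subvf -center_full capvSl.
by move=> x y xB yB; rewrite -center0 memv_cap BB_A ?bracket_centralizes.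
Qed.

End OddSquare.

Lemma even_summand {A B : {vspace V}} :
  simple_lie br -> (A + B)%VS = fullv -> directv (A + B) ->
  A != 0%VS -> B != 0%VS ->
  bracket_sub br A A A \/ bracket_sub br A A B ->
  bracket_sub br B B A \/ bracket_sub br B B B ->
  bracket_sub br A B B -> bracket_sub br A A A /\ bracket_sub br B B A.
Proof.
move=> simple full direct A_nz B_nz AA BB AB_B.
have full' : (B + A)%VS = fullv by rewrite addvC.
have direct' : directv (B + A) by rewrite directv_addC.
have BB_A : bracket_sub br B B A.
  case: BB => // BB_B.
  have B_ideal := lie_ideal_summand full' BB_B (bracket_subC AB_B).
  by case/eqP: (summand_neq_fullv direct' A_nz); apply: simple_lie_ideal_full.
split=> //; case: AA => // AA_B.
apply: bracket_subS (sub0v A) _.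
exact: square_abelian full' direct' BB_A (bracket_subC AB_B) AA_B simple A_nz.
Qed.

End LieBracket.

Lemma Z2_labelling (e o : ab_label) (P : ab_label -> ab_label -> ab_label -> Prop) :
  e <> o -> P e e e -> P e o o -> P o e o -> P o o e ->
  exists f : 'Z_2 -> ab_label, bijective f /\ forall i j, P (f i) (f j) (f (i + j)).
Proof.
move=> e_neq_o Peee Peoo Poeo Pooe.
have Z2_cases (i : 'Z_2) : i = 0 \/ i = 1.
  by case: i => -[|[|n]] //= lt; [left | right]; apply: val_inj.
exists (fun i : 'Z_2 => if i == 0 then e else o); split; last first.
  by move=> i j; case: (Z2_cases i) => ->; case: (Z2_cases j) => ->.
case: e o e_neq_o {Peee Peoo Poeo Pooe} => -[] // _.
  by exists (fun l => if l is la then 0 else 1); [move=> i; case: (Z2_cases i) => -> | case].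
by exists (fun l => if l is la then 1 else 0); [move=> i; case: (Z2_cases i) => -> | case].
Qed.

Theorem theorem1 (K : fieldType) (V : vectType K) (br : V -> V -> V)
    (La Lb : {vspace V}) :
  lie_bracket br -> simple_lie br ->
  (La + Lb)%VS = fullv -> directv (La + Lb) ->
  La != 0%VS -> Lb != 0%VS ->
  (forall j k : ab_label, exists l : ab_label,
     bracket_sub br (grade_of La Lb j) (grade_of La Lb k) (grade_of La Lb l)) ->
  exists f : 'Z_2 -> ab_label, bijective f /\
    (forall i j : 'Z_2,
       bracket_sub br (grade_of La Lb (f i)) (grade_of La Lb (f j))
                      (grade_of La Lb (f (i + j)))).
Proof.
move=> lie simple full direct La_nz Lb_nz graded.
have graded_in j k : bracket_sub br (grade_of La Lb j) (grade_of La Lb k) La \/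
    bracket_sub br (grade_of La Lb j) (grade_of La Lb k) Lb.
  by case: (graded j k) => -[]; [left | right].
pose P j k l := bracket_sub br (grade_of La Lb j) (grade_of La Lb k) (grade_of La Lb l).
case: (graded_in la lb) => /= [ab_a | ab_b]; last first.
  have [aa_a bb_a] := even_summand lie simple full direct La_nz Lb_nz
    (graded_in la la) (graded_in lb lb) ab_b.
  by apply: (@Z2_labelling la lb P) => //; apply: bracket_subC.
rewrite addvC in full; rewrite directv_addC in direct.
have [bb_b aa_b] := even_summand lie simple full direct Lb_nz La_nz
  (iffLR (or_comm _ _) (graded_in lb lb)) (iffLR (or_comm _ _) (graded_in la la))
  (bracket_subC lie ab_a).
by apply: (@Z2_labelling lb la P) => //; apply: bracket_subC.
Qed.
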